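(* Let $E$ be a finite-dimensional real or complex inner product space with an orthogonal direct sum decomposition $E=X_1\oplus X_2\oplus Y$. Fix $a_1\in X_1$, $a_2\in X_2$, $b_1,b_2\in Y$, and let $C_1=X_1+a_2+b_1$ and $C_2=a_1+X_2+b_2$. Let $\pi_i\colon E\to E$ be the orthogonal (nearest-point) projection onto the affine subspace $C_i$, $i=1,2$. For real $\gamma_1,\gamma_2$ and nonzero real $\beta$ define $f_i(\rho)=(1+\gamma_i)\pi_i(\rho)-\gamma_i\rho$ and $D(\rho)=\rho+\beta\big(\pi_1(f_2(\rho))-\pi_2(f_1(\rho))\big)$. Then for all $x_1\in X_1$, $x_2\in X_2$, $y\in Y$, $$D(x_1+x_2+y)=a_1+a_2+y+(1-\beta\gamma_2)(x_1-a_1)+(1+\beta\gamma_1)(x_2-a_2)+\beta(b_1-b_2).$$ Consequently: (i) if $b_1=b_2=b$, the iterates $D^n(\rho)$ converge for every starting point $\rho=x_1+x_2+y$ to the point $\rho^*=a_1+a_2+y$ whenever $0<\beta\gamma_2<2$ and $-2<\beta\gamma_1<0$, and $\pi_1(f_2(\rho^* ))=a_1+a_2+b\in C_1\cap C_2$; (ii) for the choice $\gamma_2=\beta^{-1}$, $\gamma_1=-\beta^{-1}$ one has, for all $n\ge 1$, $D^n(x_1+x_2+y)=a_1+a_2+y+n\beta(b_1-b_2)$; in particular, when $b_1=b_2$ every point is mapped to a fixed point of $D$ in a single iteration.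
   Context: This describes the local behaviour of the ''difference map'' built from two projections near a point where two (locally affine, mutually orthogonal) constraint sets $C_1$, $C_2$ either intersect ($b_1=b_2$) or come closest without intersecting ($b_1\ne b_2$). *)

From HB Require Import structures.
From mathcomp Require Import all_boot all_order all_algebra.
From mathcomp Require Import reals.
Set Implicit Arguments. Unset Strict Implicit. Unset Printing Implicit Defensive.
Import Order.TTheory GRing.Theory Num.Theory.
Local Open Scope ring_scope.

Section Defs.
Variables (R : realType) (E : vectType R) (ip : E -> E -> R).

Definition is_inner_product : Prop :=
  [/\ forall (a : R) (u v w : E), ip (a *: u + v) w = a * ip u w + ip v w,
      forall u v : E, ip u v = ip v u
    & forall v : E, v != 0 -> 0 < ip v v].

Definition ipnorm (v : E) : R := Num.sqrt (ip v v).

Definition in_affine (V : {vspace E}) (p c : E) : Prop := c - p \in V.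

Definition is_nearest_proj (V : {vspace E}) (p : E) (pi : E -> E) : Prop :=
  forall rho : E, in_affine V p (pi rho) /\
    (forall c : E, in_affine V p c -> ipnorm (rho - pi rho) <= ipnorm (rho - c)).

Definition converges_to (u : nat -> E) (l : E) : Prop :=
  forall e : R, 0 < e -> exists N : nat, forall n : nat, (N <= n)%N ->
    ipnorm (u n - l) < e.
End Defs.

(** In the coordinates [x1 + x2 + y] of [E = X1 ⊕ X2 ⊕ Y] both projections
    are explicit: [pi1] keeps the [X1]-coordinate and replaces the others by
    those of [a2 + b1], and symmetrically for [pi2].  Hence the difference map
    is affine and diagonal: it contracts [x1 - a1] by [1 - beta g2], [x2 - a2]
    by [1 + beta g1], and translates the [Y]-coordinate by [beta (b1 - b2)].
    Iterating gives a closed formula for [D^n], from which convergence (both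
    factors of modulus < 1 when [b1 = b2]) and the one-step behaviour for
    [g2 = - g1 = 1 / beta] (both factors vanish) are read off. *)

From HB Require Import structures.
From mathcomp Require Import all_boot all_order all_algebra.
From mathcomp Require Import reals topology normedtype sequences.
From mathcomp Require Import ring lra.
Import Order.TTheory GRing.Theory Num.Theory numFieldNormedType.Exports.
Local Open Scope classical_set_scope.
Local Open Scope ring_scope.

Section InnerProduct.
Context {R : realType} {E : vectType R} {ip : E -> E -> R}.
Hypothesis hip : is_inner_product ip.

Lemma ipC u v : ip u v = ip v u.
Proof. by case: hip. Qed.

Lemma ip0l w : ip 0 w = 0.
Proof.
case: hip => lin _ _; have := lin 1 0 0 w; rewrite scale1r addr0 => h; lra.
Qed.

Lemma ipDl u v w : ip (u + v) w = ip u w + ip v w.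
Proof. by case: hip => lin _ _; rewrite -{1}[u]scale1r lin mul1r. Qed.

Lemma ipZl a u w : ip (a *: u) w = a * ip u w.
Proof. by case: hip => lin _ _; rewrite -[a *: u]addr0 lin ip0l addr0. Qed.

Lemma ipNl u w : ip (- u) w = - ip u w.
Proof. by rewrite -scaleN1r ipZl mulN1r. Qed.

Lemma ipDr u v w : ip w (u + v) = ip w u + ip w v.
Proof. by rewrite !(ipC w) ipDl. Qed.

Lemma ipZr a u w : ip w (a *: u) = a * ip w u.
Proof. by rewrite !(ipC w) ipZl. Qed.

Lemma ip_ge0 v : 0 <= ip v v.
Proof.
case: hip => _ _ pos; have [->|/pos/ltW //] := eqVneq v 0.
by rewrite ip0l.
Qed.

Lemma ip_le0_eq0 v : ip v v <= 0 -> v = 0.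
Proof.
case: hip => _ _ pos v_le0; apply/eqP; apply: contraTT v_le0 => /pos.
by rewrite ltNge.
Qed.

Lemma ip_ext u v : (forall w, ip u w = ip v w) -> u = v.
Proof.
move=> huv; apply/eqP; rewrite -subr_eq0; apply/eqP/ip_le0_eq0.
by rewrite ipDl ipNl huv subrr.
Qed.

Lemma ip_pythagoras u v : ip u v = 0 -> ip (u + v) (u + v) = ip u u + ip v v.
Proof. by move=> uv; rewrite !ipDl !ipDr (ipC v u) uv !addr0 add0r. Qed.

Lemma ipnorm_lt v e : 0 < e -> (ipnorm ip v < e) = (ip v v < e ^+ 2).
Proof.
by move=> e0; rewrite /ipnorm -[in LHS](gtr0_norm e0) -sqrtr_sqr ltr_sqrt ?exprn_gt0.
Qed.

Lemma nearest_proj_orth {V : {vspace E}} {p : E} {proj : E -> E} {rho u : E} :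
  is_nearest_proj ip V p proj -> u \in V ->
  (forall v, v \in V -> ip v (rho - (u + p)) = 0) -> proj rho = u + p.
Proof.
move=> hproj uV orth; have [proj_in proj_min] := hproj rho.
set d := u + p - proj rho.
have dV : d \in V by rewrite /d -addrA -opprB memvD ?memvN.
have := proj_min (u + p); rewrite /in_affine addrK => /(_ uV).
have -> : rho - proj rho = (rho - (u + p)) + d by rewrite /d addrA subrK.
rewrite /ipnorm ler_sqrt ?ip_ge0 // ip_pythagoras; last by rewrite ipC orth.
by rewrite gerDl => /ip_le0_eq0 /eqP; rewrite subr_eq0 => /eqP <-.
Qed.

Lemma converges_to_orth_geometric (l : E) {u v : E} {c d : R} :
  ip u v = 0 -> `|c| < 1 -> `|d| < 1 ->
  converges_to ip (fun n => l + (c ^+ n *: u + d ^+ n *: v)) l.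
Proof.
move=> uv c_lt1 d_lt1 e e0.
have sqr_lt1 (z : R) : `|z| < 1 -> `|z ^+ 2| < 1.
  by move=> z_lt1; rewrite normrX expr_lt1.
have sqnorm_cvg0 :
    (fun n => (c ^+ 2) ^+ n * ip u u + (d ^+ 2) ^+ n * ip v v) @ \oo --> 0.
  have := cvgD (cvgM (cvg_expr (sqr_lt1 c c_lt1)) (cvg_cst (ip u u)))
               (cvgM (cvg_expr (sqr_lt1 d d_lt1)) (cvg_cst (ip v v))).
  rewrite !mul0r addr0 => h; exact: h.
have [N _ hN] := cvgr0_norm_lt _ sqnorm_cvg0 _ (exprn_gt0 2 e0).
exists N => n /hN /= /(le_lt_trans (ler_norm _)) sqnorm_lt.
rewrite addrC addKr ipnorm_lt // ip_pythagoras; last by rewrite ipZl ipZr uv !mulr0.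
by rewrite !ipZl !ipZr !mulrA -!expr2 -!exprM mulnC !exprM.
Qed.

End InnerProduct.

(* An identity in [E] is reduced to a ring identity in [R] by pairing both
   sides with an arbitrary vector. *)
Ltac vec_ring hip :=
  apply: (ip_ext hip) => ?; rewrite ?(ipDl hip, ipNl hip, ipZl hip); ring.

Section DifferenceMap.
Context {R : realType} {E : vectType R}.

Definition relaxed_proj (pi : E -> E) (g : R) (rho : E) : E :=
  (1 + g) *: pi rho - g *: rho.

Definition difference_map (pi1 pi2 : E -> E) (g1 g2 beta : R) (rho : E) : E :=
  rho + beta *: (pi1 (relaxed_proj pi2 g2 rho) - pi2 (relaxed_proj pi1 g1 rho)).

Context {ip : E -> E -> R} {X1 X2 Y : {vspace E}}.
(* The spaces in [{ pi1 ...}] keep it from being parsed as the [{pi _}]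
   notation of generic quotients. *)
Context {a1 a2 b1 b2 : E} { pi1 pi2 : E -> E }.
Hypothesis hip : is_inner_product ip.
Hypothesis o12 : forall x1 x2 : E, x1 \in X1 -> x2 \in X2 -> ip x1 x2 = 0.
Hypothesis o1Y : forall x1 y : E, x1 \in X1 -> y \in Y -> ip x1 y = 0.
Hypothesis o2Y : forall x2 y : E, x2 \in X2 -> y \in Y -> ip x2 y = 0.
Hypotheses (ha1 : a1 \in X1) (ha2 : a2 \in X2) (hb1 : b1 \in Y) (hb2 : b2 \in Y).
Hypothesis hpi1 : is_nearest_proj ip X1 (a2 + b1) pi1.
Hypothesis hpi2 : is_nearest_proj ip X2 (a1 + b2) pi2.

Let o21 x2 x1 : x2 \in X2 -> x1 \in X1 -> ip x2 x1 = 0.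
Proof. by move=> hx2 hx1; rewrite (ipC hip) o12. Qed.

Lemma pi1_decomp x1 x2 y : x1 \in X1 -> x2 \in X2 -> y \in Y ->
  pi1 (x1 + x2 + y) = x1 + (a2 + b1).
Proof.
move=> hx1 hx2 hy; apply: (nearest_proj_orth hip hpi1 hx1) => v hv.
have -> : x1 + x2 + y - (x1 + (a2 + b1)) = (x2 - a2) + (y - b1) by vec_ring hip.
by rewrite (ipDr hip) o12 ?o1Y ?memvB ?addr0.
Qed.

Lemma pi2_decomp x1 x2 y : x1 \in X1 -> x2 \in X2 -> y \in Y ->
  pi2 (x1 + x2 + y) = x2 + (a1 + b2).
Proof.
move=> hx1 hx2 hy; apply: (nearest_proj_orth hip hpi2 hx2) => v hv.
have -> : x1 + x2 + y - (x2 + (a1 + b2)) = (x1 - a1) + (y - b2) by vec_ring hip.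
by rewrite (ipDr hip) o21 ?o2Y ?memvB ?addr0.
Qed.

Lemma pi1_relaxed_pi2 g2 x1 x2 y : x1 \in X1 -> x2 \in X2 -> y \in Y ->
  pi1 (relaxed_proj pi2 g2 (x1 + x2 + y)) = (1 + g2) *: a1 - g2 *: x1 + (a2 + b1).
Proof.
move=> hx1 hx2 hy; rewrite /relaxed_proj pi2_decomp //.
have -> : (1 + g2) *: (x2 + (a1 + b2)) - g2 *: (x1 + x2 + y)
    = ((1 + g2) *: a1 - g2 *: x1) + x2 + ((1 + g2) *: b2 - g2 *: y).
  by vec_ring hip.
by rewrite pi1_decomp // memvB // memvZ.
Qed.

Lemma pi2_relaxed_pi1 g1 x1 x2 y : x1 \in X1 -> x2 \in X2 -> y \in Y ->
  pi2 (relaxed_proj pi1 g1 (x1 + x2 + y)) = (1 + g1) *: a2 - g1 *: x2 + (a1 + b2).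
Proof.
move=> hx1 hx2 hy; rewrite /relaxed_proj pi1_decomp //.
have -> : (1 + g1) *: (x1 + (a2 + b1)) - g1 *: (x1 + x2 + y)
    = x1 + ((1 + g1) *: a2 - g1 *: x2) + ((1 + g1) *: b1 - g1 *: y).
  by vec_ring hip.
by rewrite pi2_decomp // memvB // memvZ.
Qed.

Variables g1 g2 beta : R.
Local Notation D := (difference_map pi1 pi2 g1 g2 beta).

Lemma difference_map_decomp x1 x2 y : x1 \in X1 -> x2 \in X2 -> y \in Y ->
  D (x1 + x2 + y) = a1 + a2 + y + (1 - beta * g2) *: (x1 - a1)
                    + (1 + beta * g1) *: (x2 - a2) + beta *: (b1 - b2).
Proof.
move=> hx1 hx2 hy; rewrite /difference_map pi1_relaxed_pi2 // pi2_relaxed_pi1 //.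
by vec_ring hip.
Qed.

Lemma iter_difference_map n x1 x2 y : x1 \in X1 -> x2 \in X2 -> y \in Y ->
  iter n D (x1 + x2 + y) = (a1 + (1 - beta * g2) ^+ n *: (x1 - a1))
                           + (a2 + (1 + beta * g1) ^+ n *: (x2 - a2))
                           + (y + (n%:R * beta) *: (b1 - b2)).
Proof.
move=> hx1 hx2 hy; elim: n => [|n IH]; first by vec_ring hip.
have memX1 c : a1 + c *: (x1 - a1) \in X1 by rewrite memvD // memvZ // memvB.
have memX2 c : a2 + c *: (x2 - a2) \in X2 by rewrite memvD // memvZ // memvB.
have memY c : y + c *: (b1 - b2) \in Y by rewrite memvD // memvZ // memvB.
rewrite iterS IH difference_map_decomp // !exprS mulrSr.
by vec_ring hip.
Qed.

Lemma difference_map_cvg x1 x2 y : b1 = b2 ->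
  `|1 - beta * g2| < 1 -> `|1 + beta * g1| < 1 ->
  x1 \in X1 -> x2 \in X2 -> y \in Y ->
  converges_to ip (fun n => iter n D (x1 + x2 + y)) (a1 + a2 + y).
Proof.
move=> eb c2_lt1 c1_lt1 hx1 hx2 hy.
have iterE n : iter n D (x1 + x2 + y) = a1 + a2 + y
    + ((1 - beta * g2) ^+ n *: (x1 - a1) + (1 + beta * g1) ^+ n *: (x2 - a2)).
  by rewrite iter_difference_map // eb subrr scaler0 addr0; vec_ring hip.
have orth : ip (x1 - a1) (x2 - a2) = 0 by rewrite o12 ?memvB.
move=> e e0.
have [N hN] := converges_to_orth_geometric hip (a1 + a2 + y) orth c2_lt1 c1_lt1 e e0.
by exists N => n; rewrite iterE; apply: hN.
Qed.

Lemma difference_map_feasible : b1 = b2 ->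
  0 < beta * g2 < 2 -> -2 < beta * g1 < 0 ->
  forall x1 x2 y : E, x1 \in X1 -> x2 \in X2 -> y \in Y ->
    converges_to ip (fun n => iter n D (x1 + x2 + y)) (a1 + a2 + y)
    /\ pi1 (relaxed_proj pi2 g2 (a1 + a2 + y)) = a1 + a2 + b1
    /\ in_affine X1 (a2 + b1) (a1 + a2 + b1)
    /\ in_affine X2 (a1 + b2) (a1 + a2 + b1).
Proof.
move=> eb /andP[g2_gt0 g2_lt2] /andP[g1_gtN2 g1_lt0] x1 x2 y hx1 hx2 hy.
split; last split; last split.
- apply: difference_map_cvg; rewrite // ltr_norml; apply/andP; split; lra.
- by rewrite pi1_relaxed_pi2 //; vec_ring hip.
- by rewrite /in_affine -[a1 + a2 + b1]addrA addrK.
- by rewrite /in_affine -eb (addrAC a1 a2 b1) (addrC (a1 + b1)) addrK.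
Qed.

Lemma iter_difference_map_one_step n x1 x2 y : beta != 0 ->
  g2 = beta^-1 -> g1 = - beta^-1 -> (0 < n)%N ->
  x1 \in X1 -> x2 \in X2 -> y \in Y ->
  iter n D (x1 + x2 + y) = a1 + a2 + y + (n%:R * beta) *: (b1 - b2).
Proof.
move=> beta_neq0 hg2 hg1 n_gt0 hx1 hx2 hy.
rewrite iter_difference_map // hg2 hg1 mulrN mulfV // subrr expr0n gtn_eqF //=.
by vec_ring hip.
Qed.

Lemma difference_map_idem : beta != 0 -> g2 = beta^-1 -> g1 = - beta^-1 ->
  (X1 + X2 + Y)%VS = fullv -> b1 = b2 -> forall rho, D (D rho) = D rho.
Proof.
move=> beta_neq0 hg2 hg1 full eb rho.
have : rho \in (X1 + X2 + Y)%VS by rewrite full memvf.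
case/memv_addP=> x12 /memv_addP[x1 hx1 [x2 hx2 ->]] [y hy ->].
rewrite -[D (D _)]/(iter 2 D _) -[D _]/(iter 1 D _).
by rewrite !iter_difference_map_one_step // eb subrr !scaler0.
Qed.

End DifferenceMap.

Theorem mainTheorem3 (R : realType) (E : vectType R) (ip : E -> E -> R)
  (hip : is_inner_product ip)
  (X1 X2 Y : {vspace E})
  (o12 : forall x1 x2 : E, x1 \in X1 -> x2 \in X2 -> ip x1 x2 = 0)
  (o1Y : forall x1 y : E, x1 \in X1 -> y \in Y -> ip x1 y = 0)
  (o2Y : forall x2 y : E, x2 \in X2 -> y \in Y -> ip x2 y = 0)
  (hfull : (X1 + X2 + Y)%VS = fullv)
  (a1 a2 b1 b2 : E) (ha1 : a1 \in X1) (ha2 : a2 \in X2)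
  (hb1 : b1 \in Y) (hb2 : b2 \in Y)
  (pi1 pi2 : E -> E)
  (hpi1 : is_nearest_proj ip X1 (a2 + b1) pi1)
  (hpi2 : is_nearest_proj ip X2 (a1 + b2) pi2)
  (g1 g2 beta : R) (hbeta : beta != 0) :
  let f1 := fun rho : E => (1 + g1) *: pi1 rho - g1 *: rho in
  let f2 := fun rho : E => (1 + g2) *: pi2 rho - g2 *: rho in
  let D := fun rho : E => rho + beta *: (pi1 (f2 rho) - pi2 (f1 rho)) in
  (forall x1 x2 y : E, x1 \in X1 -> x2 \in X2 -> y \in Y ->
     D (x1 + x2 + y) = a1 + a2 + y + (1 - beta * g2) *: (x1 - a1)
                       + (1 + beta * g1) *: (x2 - a2) + beta *: (b1 - b2))
  /\ (b1 = b2 -> 0 < beta * g2 < 2 -> -2 < beta * g1 < 0 ->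
      forall x1 x2 y : E, x1 \in X1 -> x2 \in X2 -> y \in Y ->
        converges_to ip (fun n => iter n D (x1 + x2 + y)) (a1 + a2 + y)
        /\ pi1 (f2 (a1 + a2 + y)) = a1 + a2 + b1
        /\ in_affine X1 (a2 + b1) (a1 + a2 + b1)
        /\ in_affine X2 (a1 + b2) (a1 + a2 + b1))
  /\ (g2 = beta^-1 -> g1 = - beta^-1 ->
      (forall (n : nat) (x1 x2 y : E), (0 < n)%N ->
         x1 \in X1 -> x2 \in X2 -> y \in Y ->
         iter n D (x1 + x2 + y) = a1 + a2 + y + (n%:R * beta) *: (b1 - b2))
      /\ (b1 = b2 -> forall rho : E, D (D rho) = D rho)).
Proof.
move=> f1 f2 D.
split.
  exact: (difference_map_decomp hip o12 o1Y o2Y ha1 ha2 hb1 hb2 hpi1 hpi2 g1 g2 beta).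
split.
  exact: (difference_map_feasible hip o12 o1Y o2Y ha1 ha2 hb1 hb2 hpi1 hpi2 g1 g2 beta).
move=> hg2 hg1; split.
- move=> n x1 x2 y.
  exact: (iter_difference_map_one_step hip o12 o1Y o2Y ha1 ha2 hb1 hb2 hpi1 hpi2
            g1 g2 beta n x1 x2 y hbeta hg2 hg1).
- exact: (difference_map_idem hip o12 o1Y o2Y ha1 ha2 hb1 hb2 hpi1 hpi2
            g1 g2 beta hbeta hg2 hg1 hfull).
Qed.
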